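(* In the Ising-driven environment, let $\delta>0$. If $\delta<d^+$ and $$2h-4\beta d\ \ge\ \ln\frac{d^-+\delta}{d^+-\delta}+\ln\max_{|e|=1}\frac{\omega^+(e)}{\omega^-(e)},$$ then for every $x\in\mathbb Z^d$, $P$-a.s., $$\inf_{f:\{\pm e_i\}_{i=1}^d\to(0,1]}\left[E\Big(\frac{1}{\sum_{|e|=1}f(e)\,\omega(x,x+e)}\ \Big|\ \mathcal F_{\{x\}^c}\Big)^{-1}E\Big(\frac{d(x,\omega)\cdot e_1}{\sum_{|e|=1}f(e)\,\omega(x,x+e)}\ \Big|\ \mathcal F_{\{x\}^c}\Big)\right]\ge\delta .$$
   Context: Ising model: for $\beta\ge0$, $h>0$, $\pi=\pi_{\beta,h}$ is a probability measure on $\{-1,+1\}^{\mathbb Z^d}$ with $\pi(\sigma(x)=\pm1\mid\sigma(y),y\ne x)=\exp(\pm(\beta S_x+h))/(\exp(\beta S_x+h)+\exp(-(\beta S_x+h)))$, where $S_x=\sum_{|e|=1}\sigma(x+e)$. Let $\omega^+,\omega^-$ be probability vectors on $\{e\in\mathbb Z^d:|e|=1\}$ with $\omega^\pm(e)>0$ for all $|e|=1$, $d^+:=\big(\sum_{|e|=1}\omega^+(e)e\big)\cdot e_1>0$ and $-d^-:=\big(\sum_{|e|=1}\omega^-(e)e\big)\cdot e_1<0$. The environment is $\omega(x,x+e)=\omega^+(e)$ if $\sigma(x)=+1$ and $\omega(x,x+e)=\omega^-(e)$ if $\sigma(x)=-1$; $P$ is the law of $\omega$ when $\sigma\sim\pi$,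 and $E$ its expectation. $d(x,\omega)=\sum_{|e|=1}e\,\omega(x,x+e)$ is the local drift; $\mathcal F_{\{x\}^c}=\sigma(\omega_z:z\ne x)$; $e_1,\dots,e_d$ are the canonical unit vectors. *)

From HB Require Import structures.
From mathcomp Require Import all_boot all_order all_algebra.
From mathcomp Require Import all_classical all_reals all_analysis.
Set Implicit Arguments. Unset Strict Implicit. Unset Printing Implicit Defensive.
Import Order.TTheory GRing.Theory Num.Theory.
Local Open Scope classical_set_scope.
Local Open Scope ring_scope.

(* Unit vectors of Z^d: e = (i, b) stands for +e_i (b = true) or -e_i (b = false). *)
Definition Dir (d : nat) := ('I_d * bool)%type.
Definition Site (d : nat) := 'I_d -> int.
(* Spin configurations: true = +1, false = -1. *)
Definition Config (d : nat) := Site d -> bool.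

Definition sgnR {R : realType} (b : bool) : R := if b then 1 else -1.
Definition sgnZ (b : bool) : int := if b then 1 else -1.

Definition shift d (x : Site d) (e : Dir d) : Site d :=
  fun i => if i == e.1 then x i + sgnZ e.2 else x i.

(* e . e_1 (e_1 is the first canonical vector, coordinate index 0) *)
Definition dir_e1 {R : realType} d (e : Dir d) : R :=
  if val e.1 == 0%N then sgnR e.2 else 0.

Definition Ssum {R : realType} d (s : Config d) (x : Site d) : R :=
  \sum_(e : Dir d) sgnR (s (shift x e)).

(* pi(sigma(x) = b | sigma(y), y <> x) *)
Definition ising_cond {R : realType} d (beta h : R) (x : Site d) (b : bool)
  (s : Config d) : R :=
  expR (sgnR b * (beta * Ssum s x + h)) /
  (expR (beta * Ssum s x + h) + expR (- (beta * Ssum s x + h))).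

Definition coord_gen (d : nat) : set (set (Config d)) :=
  [set A | exists y b, A = [set s : Config d | s y = b]].
Definition ConfigM (d : nat) := g_sigma_algebraType (@coord_gen d).

Definition spins_off d (x : Site d) : set (set (ConfigM d)) :=
  <<s [set A | exists y b, y <> x /\ A = [set s : ConfigM d | s y = b]] >>.

Definition is_ising {R : realType} d (P : probability (ConfigM d) R) (beta h : R) :=
  forall (x : Site d) (b : bool) (B : set (ConfigM d)), spins_off x B ->
    P ([set s : ConfigM d | s x = b] `&` B) =
    (\int[P]_(s in B) (ising_cond beta h x b s)%:E)%E.

(* the environment omega(z, z+.) *)
Definition env {R : realType} d (wp wm : Dir d -> R) (s : Config d) (z : Site d)
  : Dir d -> R := if s z then wp else wm.

Definition Fxc {R : realType} d (wp wm : Dir d -> R) (x : Site d)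
  : set (set (ConfigM d)) :=
  <<s [set A | exists z, z <> x /\
        exists V : set (Dir d -> R), A = [set s : ConfigM d | V (env wp wm s z)]] >>.

(* kappa is a regular conditional distribution of sigma(x) (equivalently of
   omega_x) given the sigma-algebra G, under P. *)
Definition is_rcd {R : realType} d (P : probability (ConfigM d) R)
  (G : set (set (ConfigM d))) (x : Site d) (kappa : ConfigM d -> bool -> R) :=
  [/\ forall b (V : set R), measurable V -> G ((fun s => kappa s b) @^-1` V),
      forall s b, 0 <= kappa s b,
      forall s, kappa s true + kappa s false = 1 &
      forall b (B : set (ConfigM d)), G B ->
        P ([set s : ConfigM d | s x = b] `&` B) =
        (\int[P]_(s in B) (kappa s b)%:E)%E].

(* E( g(omega_x) | G )(s), computed with the regular conditional distribution kappa *)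
Definition cexp {R : realType} d (wp wm : Dir d -> R) (kappa : ConfigM d -> bool -> R)
  (g : (Dir d -> R) -> R) (s : ConfigM d) : R :=
  kappa s true * g wp + kappa s false * g wm.

Definition wsum {R : realType} d (f w : Dir d -> R) : R := \sum_(e : Dir d) f e * w e.
(* d(x, omega) . e_1 for omega_x = w *)
Definition drift1 {R : realType} d (w : Dir d -> R) : R := \sum_(e : Dir d) w e * dir_e1 e.

Definition drift_ratio {R : realType} d (wp wm : Dir d -> R) (kappa : ConfigM d -> bool -> R)
  (f : Dir d -> R) (s : ConfigM d) : R :=
  (cexp wp wm kappa (fun w => 1 / wsum f w) s)^-1 *
  cexp wp wm kappa (fun w => drift1 w / wsum f w) s.

Definition admissible {R : realType} d : set (Dir d -> R) :=
  [set f | forall e, 0 < f e <= 1].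

(* Since S_x >= -2d, the Ising probability of sigma(x) = +1 given the spins off x
   is at least c/(1+c) with c = exp(2h - 4 beta d).  Every F_{{x}^c}-event is an
   event of the spins off x, so the conditional probability of sigma(x) = +1 given
   F_{{x}^c} integrates to at least c/(1+c) times the mass of each such event, hence
   is a.s. at least c/(1+c): the odds of omega_x = omega^+ are at least c.
   The hypothesis says c dominates (d^- + delta)/(d^+ - delta) times
   max_e omega^+(e)/omega^-(e); the second factor bounds sum_e f(e) omega^+(e) by a
   multiple of sum_e f(e) omega^-(e) for every f > 0, and the first then makes the
   f-weighted drift at least delta. *)
From HB Require Import structures.
From mathcomp Require Import all_boot all_order all_algebra.
From mathcomp Require Import all_classical all_reals all_analysis.
From mathcomp Require Import ring lra measurable_realfun.
Import Order.TTheory GRing.Theory Num.Theory.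
Import numFieldNormedType.Exports.
Local Open Scope classical_set_scope.
Local Open Scope ring_scope.
Set Implicit Arguments. Unset Strict Implicit.

Lemma ln_add_le_expR (R : realType) (q M t : R) :
  0 < q -> 0 < M -> ln q + ln M <= t -> q * M <= expR t.
Proof.
move=> q0 M0 le_t.
by rewrite -[q * M]lnK ?posrE ?mulr_gt0 // ler_expR lnM ?posrE.
Qed.

Lemma ae_ge_of_integral_ge (dT : measure_display) (T : measurableType dT)
  (R : realType) (mu : {finite_measure set T -> \bar R})
  (G : set (set T)) (k : T -> R) (a : R) :
  G `<=` measurable ->
  (forall V, measurable V -> G (k @^-1` V)) ->
  (forall t, 0 <= k t) ->
  (forall B, G B -> (a%:E * mu B <= \int[mu]_(t in B) (k t)%:E)%E) ->
  {ae mu, forall t, a <= k t}.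
Proof.
move=> Gm Gk k0 Hint.
have mk : measurable_fun setT k by move=> _ V mV; rewrite setTI; exact/Gm/Gk.
pose r (n : nat) := a - n.+1%:R^-1.
pose B n := k @^-1` `]-oo, r n[.
have GB n : G (B n) by apply: Gk; exact: measurable_itv.
have muB0 n : mu (B n) = 0.
  have mB := Gm _ (GB n).
  have upper : (\int[mu]_(t in B n) (k t)%:E <= (r n)%:E * mu (B n))%E.
    rewrite -integral_cst //; apply: ge0_le_integral => //.
    - by move=> t _; rewrite lee_fin.
    - exact/measurable_EFinP/(measurable_funS _ _ mk).
    - by move=> t; rewrite /B /preimage /= in_itv /= lee_fin => /ltW.
  have := le_trans (Hint _ (GB n)) upper.
  rewrite -(fineK (fin_num_measure mu _ mB)) -!EFinM lee_fin.
  have : 0 <= fine (mu (B n)) by rewrite fine_ge0.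
  have : r n < a by rewrite /r ltrBlDr ltrDl invr_gt0 ltr0n.
  by move=> ra p0 hp; congr (_%:E); nra.
apply: (negligibleS _ (negligible_bigcup (fun n => _ : mu.-negligible (B n)))).
  move=> t /= /negP; rewrite -ltNge => /ltr_add_invr[n hn]; exists n => //.
  by rewrite /B /preimage /= in_itv /= /r -(ltrD2r (n.+1%:R^-1)) subrK.
by move=> n; exists (B n); split => //; exact: Gm.
Qed.

Lemma continuous_ising_weight (R : realType) (k beta h : R) :
  continuous (fun t : R => expR (k * (beta * t + h)) /
     (expR (beta * t + h) + expR (- (beta * t + h)))).
Proof.
have caff : continuous (fun t : R => beta * t + h).
  by move=> t; apply: continuousD; [exact: mulrl_continuous | exact: cst_continuous].
have cexpo (g : R -> R) : continuous g -> continuous (fun t => expR (g t)).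
  by move=> cg t; apply: continuous_comp; [exact: cg | exact: continuous_expR].
have cnum : continuous (fun t : R => expR (k * (beta * t + h))).
  by apply: cexpo => t; exact: (continuous_comp (caff t) (@mulrl_continuous _ k _)).
have cden : continuous (fun t : R => expR (beta * t + h) + expR (- (beta * t + h))).
  have cneg : continuous (fun t : R => - (beta * t + h)).
    by move=> t; exact: (continuousN (caff t)).
  by move=> t; exact: (continuousD (cexpo _ caff t) (cexpo _ cneg t)).
move=> t; apply: (continuousM (cnum t)); apply: continuousV (cden t) => //.
by rewrite lt0r_neq0 // addr_gt0 ?expR_gt0.
Qed.

Lemma sigma_algebra_spin_event d (S : set (set (ConfigM d))) (z : Site d)
  (Q : bool -> Prop) :
  sigma_algebra setT S -> (forall b, S [set s : ConfigM d | s z = b]) ->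
  S [set s : ConfigM d | Q (s z)].
Proof.
move=> [S0 SC _] Sz.
have [Qt|Qt] := pselect (Q true); have [Qf|Qf] := pselect (Q false).
- have -> : [set s : ConfigM d | Q (s z)] = setT.
    by apply/seteqP; split => s // _ /=; case: (s z).
  by rewrite -(setD0 setT); exact: SC.
- have -> : [set s : ConfigM d | Q (s z)] = [set s | s z = true].
    by apply/seteqP; split => s /=; case: (s z).
  exact: Sz.
- have -> : [set s : ConfigM d | Q (s z)] = [set s | s z = false].
    by apply/seteqP; split => s /=; case: (s z).
  exact: Sz.
- have -> : [set s : ConfigM d | Q (s z)] = set0.
    by apply/seteqP; split => s /=; case: (s z).
  exact: S0.
Qed.

Lemma measurable_spin_event d (z : Site d) (Q : bool -> Prop) :
  measurable [set s : ConfigM d | Q (s z)].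
Proof.
apply: sigma_algebra_spin_event; first exact: sigma_algebra_measurable.
by move=> b; apply: sub_sigma_algebra; exists z, b.
Qed.

Lemma Fxc_sub_sigma_algebra (R : realType) d (wp wm : Dir d -> R) (x : Site d)
  (S : set (set (ConfigM d))) :
  sigma_algebra setT S ->
  (forall z b, z <> x -> S [set s : ConfigM d | s z = b]) ->
  Fxc wp wm x `<=` S.
Proof.
move=> HS Sz; apply: smallest_sub => // _ [z [zx [V ->]]].
exact: (sigma_algebra_spin_event (fun b => V (if b then wp else wm)) HS (Sz z ^~ zx)).
Qed.

Lemma Fxc_measurable (R : realType) d (wp wm : Dir d -> R) (x : Site d) :
  Fxc wp wm x `<=` measurable.
Proof.
apply: Fxc_sub_sigma_algebra; first exact: sigma_algebra_measurable.
by move=> z b _; apply: sub_sigma_algebra; exists z, b.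
Qed.

Lemma Fxc_spins_off (R : realType) d (wp wm : Dir d -> R) (x : Site d) :
  Fxc wp wm x `<=` spins_off x.
Proof.
apply: Fxc_sub_sigma_algebra; first exact: smallest_sigma_algebra.
by move=> z b zx; apply: sub_sigma_algebra; exists z, b.
Qed.

Lemma measurable_Ssum (R : realType) d (x : Site d) :
  measurable_fun setT (fun s : ConfigM d => (Ssum s x : R)).
Proof.
apply: measurable_sum => e _ Y _; rewrite setTI.
exact: (measurable_spin_event _ (fun b => Y (sgnR b))).
Qed.

Lemma measurable_ising_cond (R : realType) d (beta h : R) (x : Site d) b :
  measurable_fun setT (fun s : ConfigM d => ising_cond beta h x b s).
Proof.
pose w (t : R) := expR (sgnR b * (beta * t + h)) /
  (expR (beta * t + h) + expR (- (beta * t + h))).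
have -> : (fun s => ising_cond beta h x b s) = w \o (fun s => Ssum s x) by [].
apply: measurableT_comp; last exact: measurable_Ssum.
by apply: continuous_measurable_fun; exact: continuous_ising_weight.
Qed.

Lemma Ssum_ge (R : realType) d (s : Config d) (x : Site d) :
  - (2 * d%:R) <= (Ssum s x : R).
Proof.
apply: le_trans (_ : \sum_(e : Dir d) (-1 : R) <= _).
  by rewrite sumr_const card_prod card_ord card_bool mulNrn natrM mulrC.
by apply: ler_sum => e _; rewrite /sgnR; case: (s _).
Qed.

Lemma ising_cond_true_ge (R : realType) d (beta h : R) (x : Site d) (s : Config d) :
  0 <= beta ->
  expR (2 * h - 4 * beta * d%:R) / (1 + expR (2 * h - 4 * beta * d%:R))
   <= ising_cond beta h x true s.
Proof.
move=> beta0; rewrite /ising_cond /sgnR mul1r expRN.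
set c := expR _; set E := expR (beta * Ssum s x + h).
have E0 : 0 < E by exact: expR_gt0.
have c0 : 0 < c by exact: expR_gt0.
have cE : c <= E ^+ 2.
  rewrite /E expr2 -expRD /c ler_expR.
  have : 0 <= beta * (Ssum s x + 2 * d%:R).
    by rewrite mulr_ge0 // -(opprK (2 * _)) subr_ge0 Ssum_ge.
  by rewrite mulrDr; lra.
have -> : E / (E + E^-1) = E ^+ 2 / (1 + E ^+ 2).
  by field; rewrite ?lt0r_neq0 ?addr_gt0 ?invr_gt0 ?exprn_gt0.
rewrite -subr_ge0.
have -> : E ^+ 2 / (1 + E ^+ 2) - c / (1 + c) = (E ^+ 2 - c) / ((1 + E ^+ 2) * (1 + c)).
  by field; rewrite ?lt0r_neq0 ?addr_gt0 ?exprn_gt0.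
by rewrite divr_ge0 ?subr_ge0 // mulr_ge0 // addr_ge0 // ltW // exprn_gt0.
Qed.

Lemma rcd_true_ae_ge (R : realType) d (P : probability (ConfigM d) R) (beta h : R)
  (wp wm : Dir d -> R) (x : Site d) (kappa : ConfigM d -> bool -> R) :
  0 <= beta -> is_ising P beta h -> is_rcd P (Fxc wp wm x) x kappa ->
  {ae P, forall s, expR (2 * h - 4 * beta * d%:R) /
                   (1 + expR (2 * h - 4 * beta * d%:R)) <= kappa s true}.
Proof.
move=> beta0 HP [kappa_meas kappa_ge0 _ kappa_int].
apply: (ae_ge_of_integral_ge (@Fxc_measurable _ _ wp wm x) (kappa_meas true)).
  by move=> s; exact: kappa_ge0.
move=> B GB.
have mB := Fxc_measurable GB.
rewrite -kappa_int // (HP x true B (Fxc_spins_off GB)) -integral_cst //.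
apply: ge0_le_integral => //.
- by move=> s _; rewrite lee_fin divr_ge0 ?addr_ge0 // ltW // expR_gt0.
- apply/measurable_EFinP; exact: measurable_funS (measurable_ising_cond beta h x true).
- by move=> s _; rewrite lee_fin; exact: ising_cond_true_ge.
Qed.

Lemma weighted_ratio_ge (R : realFieldType) (kt kf Wp Wm Dp Dm delta : R) :
  0 <= kt -> 0 <= kf -> 0 < kt + kf -> 0 < Wp -> 0 < Wm ->
  kf * (- Dm + delta) * Wp <= kt * (Dp - delta) * Wm ->
  delta <= (kt * (1 / Wp) + kf * (1 / Wm))^-1 * (kt * (Dp / Wp) + kf * (Dm / Wm)).
Proof.
move=> kt0 kf0 k0 Wp0 Wm0 key.
have den0 : 0 < kt * (1 / Wp) + kf * (1 / Wm).
  have -> : kt * (1 / Wp) + kf * (1 / Wm) = (kt * Wm + kf * Wp) / (Wp * Wm).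
    by field; rewrite !lt0r_neq0.
  rewrite divr_gt0 ?mulr_gt0 //.
  have [kt_pos | kt_le0] := ltrP 0 kt.
    by have := mulr_gt0 kt_pos Wm0; have := mulr_ge0 kf0 (ltW Wp0); lra.
  have kf_pos : 0 < kf by lra.
  by have := mulr_ge0 kt0 (ltW Wm0); have := mulr_gt0 kf_pos Wp0; lra.
rewrite -ler_pdivrMl ?invr_gt0 // invrK -subr_ge0.
have -> : kt * (Dp / Wp) + kf * (Dm / Wm) - (kt * (1 / Wp) + kf * (1 / Wm)) * delta
   = (kt * (Dp - delta) * Wm - kf * (- Dm + delta) * Wp) / (Wp * Wm).
  by field; rewrite !lt0r_neq0.
by rewrite divr_ge0 ?subr_ge0 // ltW // mulr_gt0.
Qed.

Lemma wsum_gt0 (R : realType) d (f w : Dir d -> R) : (0 < d)%N ->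
  (forall e, 0 < f e) -> (forall e, 0 < w e) -> 0 < wsum f w.
Proof.
move=> d0 f0 w0; rewrite /wsum (bigD1 (Ordinal d0, true)) //=.
by rewrite ltr_pwDl ?mulr_gt0 // sumr_ge0 // => e _; rewrite mulr_ge0 // ltW.
Qed.

Lemma wsum_le_max_ratio (R : realType) d (f wp wm : Dir d -> R) :
  (forall e, 0 <= f e) -> (forall e, 0 < wm e) ->
  wsum f wp <= \big[Num.max/0]_(e : Dir d) (wp e / wm e) * wsum f wm.
Proof.
move=> f0 wm0; rewrite /wsum mulr_sumr; apply: ler_sum => e _.
have := le_bigmax 0 (fun e => wp e / wm e) e; rewrite ler_pdivrMr // => le_wp.
by rewrite mulrCA ler_wpM2l.
Qed.

Lemma max_ratio_gt0 (R : realType) d (wp wm : Dir d -> R) : (0 < d)%N ->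
  (forall e, 0 < wp e) -> (forall e, 0 < wm e) ->
  0 < \big[Num.max/0]_(e : Dir d) (wp e / wm e).
Proof.
move=> d0 wp0 wm0.
apply: lt_le_trans (le_bigmax 0 (fun e => wp e / wm e) (Ordinal d0, true)).
exact: divr_gt0.
Qed.

Lemma drift_ratio_ge (R : realType) d (wp wm : Dir d -> R)
  (kappa : ConfigM d -> bool -> R) (s : ConfigM d) (f : Dir d -> R) (delta c : R) :
  (0 < d)%N -> (forall e, 0 < wp e) -> (forall e, 0 < wm e) ->
  delta < drift1 wp -> 0 <= - drift1 wm + delta ->
  (- drift1 wm + delta) / (drift1 wp - delta) *
    \big[Num.max/0]_(e : Dir d) (wp e / wm e) <= c ->
  0 <= kappa s true -> 0 <= kappa s false -> kappa s true + kappa s false = 1 ->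
  c * kappa s false <= kappa s true ->
  admissible f -> delta <= drift_ratio wp wm kappa f s.
Proof.
move=> d0 wp0 wm0 gap_p gap_m le_c kt0 kf0 k1 odds f_adm.
have f0 e : 0 < f e by case/andP: (f_adm e).
set M := \big[Num.max/0]_(e : Dir d) _ in le_c.
have Wp0 := wsum_gt0 d0 f0 wp0; have Wm0 := wsum_gt0 d0 f0 wm0.
have WpM := wsum_le_max_ratio wp (fun e => ltW (f0 e)) wm0.
have M0 : 0 <= M by exact/ltW/max_ratio_gt0.
have le_c' : (- drift1 wm + delta) * M <= c * (drift1 wp - delta).
  by move: le_c; rewrite mulrAC ler_pdivrMr // subr_gt0.
apply: weighted_ratio_ge; rewrite ?k1 //.
set A := - drift1 wm + delta; set B := drift1 wp - delta; rewrite -/M in WpM.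
have B0 : 0 <= B by rewrite subr_ge0 ltW.
apply: (le_trans (y := kappa s false * A * (M * wsum f wm))).
  by rewrite ler_wpM2l ?mulr_ge0.
apply: (le_trans (y := c * kappa s false * B * wsum f wm)); last first.
  apply: ler_wpM2r; first exact: ltW Wm0.
  by apply: ler_wpM2r.
rewrite mulrA ler_wpM2r ?(ltW Wm0) //.
by rewrite -mulrA [c * _]mulrC -mulrA ler_wpM2l.
Qed.

Theorem lemma5p18 (R : realType) (d : nat) (hd : (0 < d)%N)
  (beta h : R) (hbeta : 0 <= beta) (hh : 0 < h)
  (wp wm : Dir d -> R)
  (hwp : forall e, 0 < wp e) (hwm : forall e, 0 < wm e)
  (swp : \sum_(e : Dir d) wp e = 1) (swm : \sum_(e : Dir d) wm e = 1)
  (hdp : 0 < drift1 wp) (hdm : 0 < - drift1 wm)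
  (P : probability (ConfigM d) R) (HP : is_ising P beta h)
  (delta : R) (hdelta : 0 < delta) (hdd : delta < drift1 wp)
  (Hcond : ln ((- drift1 wm + delta) / (drift1 wp - delta))
           + ln (\big[Num.max/0]_(e : Dir d) (wp e / wm e))
           <= 2 * h - 4 * beta * d%:R) :
  forall (x : Site d) (kappa : ConfigM d -> bool -> R),
    is_rcd P (Fxc wp wm x) x kappa ->
    {ae P, forall s : ConfigM d,
       delta <= inf [set drift_ratio wp wm kappa f s | f in @admissible R d]}.
Proof.
move=> x kappa Hrcd; have [_ kappa_ge0 kappa_sum _] := Hrcd.
set c := expR (2 * h - 4 * beta * d%:R).
have c0 : 0 < c by exact: expR_gt0.
have le_c : (- drift1 wm + delta) / (drift1 wp - delta) *
            \big[Num.max/0]_(e : Dir d) (wp e / wm e) <= c.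
  apply: ln_add_le_expR Hcond; last exact: max_ratio_gt0 hd hwp hwm.
  by rewrite divr_gt0 ?subr_gt0 ?addr_gt0.
have ae_odds := rcd_true_ae_ge hbeta HP Hrcd.
near=> s.
have : c / (1 + c) <= kappa s true by near: s.
rewrite ler_pdivrMr ?addr_gt0 // => odds.
apply: lb_le_inf.
  exists (drift_ratio wp wm kappa (fun _ => 1) s), (fun _ => 1) => //.
  by move=> e; rewrite ltr01 lexx.
move=> _ [f f_adm <-]; apply: (drift_ratio_ge hd hwp hwm hdd _ le_c) => //.
- by rewrite ltW // addr_gt0.
- have -> : kappa s false = 1 - kappa s true by rewrite -(kappa_sum s) addrAC subrr add0r.
  by rewrite mulrBr mulr1 [c * _]mulrC lerBlDr -[X in X + _]mulr1 -mulrDr.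
Unshelve. all: by end_near.
Qed.
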